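(* Let $G$ be a graph on $n$ nodes with $m$ edges, let $k\in\{1,\dots,n-1\}$, and let $T$ be a threshold graph on $n$ nodes with $m$ edges such that $\sum_{i=1}^k\lambda_i(T)\ge\sum_{i=1}^k\lambda_i(G)$. Then the complement graphs $\bar G$ and $\bar T$ satisfy $\sum_{i=1}^{n-k-1}\lambda_i(\bar T)\ge\sum_{i=1}^{n-k-1}\lambda_i(\bar G)$. Moreover, every threshold graph $T$ on $n$ nodes with $m$ edges satisfies $\sum_{i=1}^{n-1}\lambda_i(\bar T)=\sum_{i=1}^{n-1}\lambda_i(\bar G)$.
   Context: All graphs are finite and simple; $\bar H$ denotes the complement of a graph $H$. For a graph $G$ on $n$ nodes, the Laplacian eigenvalues (eigenvalues of $L(G)=D(G)-A(G)$) are $\lambda_1(G)\ge\dots\ge\lambda_n(G)=0$. A threshold graph is a graph obtainable from the empty graph by repeatedly adding a new node that is either isolated or adjacent to all previously added nodes. *)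

From HB Require Import structures.
From mathcomp Require Import all_boot all_order all_algebra all_fingroup.
From mathcomp Require Import reals.
From Stdlib Require Import ClassicalEpsilon.
Set Implicit Arguments. Unset Strict Implicit. Unset Printing Implicit Defensive.
Import Order.TTheory GRing.Theory Num.Theory.
Local Open Scope ring_scope.

Definition simple_graph n (e : rel 'I_n) : Prop :=
  (forall i j, e i j = e j i) /\ (forall i, e i i = false).

Definition nedges n (e : rel 'I_n) : nat :=
  #|[set p : 'I_n * 'I_n | (p.1 < p.2)%N && e p.1 p.2]|.

Definition compl_graph n (e : rel 'I_n) : rel 'I_n :=
  fun i j => (i != j) && ~~ e i j.

(* threshold graph: there is an order of insertion of the vertices
   (p 0, p 1, ..., p (n-1)) and for each step j a bit b j saying whether the
   new vertex p j is joined to all previously added vertices (true) or is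
   isolated from them (false). *)
Definition threshold n (e : rel 'I_n) : Prop :=
  exists (p : 'S_n) (b : 'I_n -> bool),
    forall i j : 'I_n, (i < j)%N -> e (p i) (p j) = b j.

Definition laplacian (R : realType) n (e : rel 'I_n) : 'M[R]_n :=
  \matrix_(i, j) (if i == j then (#|[set k | e i k]|)%:R else - (e i j)%:R).

(* The Laplacian eigenvalues listed with multiplicity in nonincreasing order:
   the (unique) sequence s of length n, sorted nonincreasingly, with
   char_poly L = prod_(x <- s) (X - x). *)
Definition lap_spectrum_spec (R : realType) n (e : rel 'I_n) (s : seq R) : Prop :=
  [/\ size s = n, sorted (fun x y : R => y <= x) s &
      char_poly (laplacian R e) = \prod_(x <- s) ('X - x%:P)].

Definition lap_eigs (R : realType) n (e : rel 'I_n) : seq R :=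
  epsilon (inhabits [::]) (lap_spectrum_spec e).

Definition lambda (R : realType) n (e : rel 'I_n) (i : nat) : R :=
  nth 0 (lap_eigs R e) i.-1.

Definition lap_ksum (R : realType) n (e : rel 'I_n) (k : nat) : R :=
  \sum_(1 <= i < k.+1) lambda R e i.

From HB Require Import structures.
From mathcomp Require Import all_boot all_order all_algebra all_fingroup.
From mathcomp Require Import reals ring.
From mathcomp.real_closed Require Import complex.
From Stdlib Require Import ClassicalEpsilon.
Import Order.TTheory GRing.Theory Num.Theory.
Local Open Scope ring_scope.
Set Implicit Arguments. Unset Strict Implicit. Unset Printing Implicit Defensive.

(* The Laplacian of the complement is [n I - J - L(G)].  Every row of
   [n I - L(G)] sums to [n], and subtracting the all-ones matrix [J] from a
   matrix with constant row sums [a] only moves the eigenvalue [a] to [a - n].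
   Hence the spectrum of [L(Gbar)] is [0] together with [n - lambda_i(G)] for
   [i < n] (the remaining eigenvalue [lambda_n(G) = 0] is the smallest, the
   Laplacian being positive semidefinite), i.e. [lambda_i(Gbar) = n -
   lambda_(n-i)(G)] for [i < n].  Positive semidefiniteness, proved over
   [R[i]], also shows that the characteristic polynomial of [L(G)] splits over
   [R], so that the sorted spectrum exists. *)

Lemma det_sum_col0 (R : comNzRingType) m (A : 'M[R]_m.+1) :
  \det (\matrix_(i, j) if j == ord0 then \sum_k A i k else A i j) = \det A.
Proof.
pose U : 'M[R]_m.+1 := \matrix_(i, j) ((j == ord0) || (i == j))%:R.
have detU : \det U = 1.
  rewrite det_trig; last first.
    apply/is_trig_mxP => i j lt_ij; rewrite mxE -[i == j]val_eqE -[j == ord0]val_eqE /=.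
    by rewrite (ltn_eqF lt_ij) (gtn_eqF (leq_ltn_trans (leq0n i) lt_ij)).
  by rewrite big1 // => i _; rewrite mxE eqxx orbT.
rewrite -[RHS]mulr1 -detU -det_mulmx; congr (\det _); apply/matrixP => i j.
rewrite !mxE; case: eqP => [-> | /eqP j_neq0].
  by apply: eq_bigr => k _; rewrite mxE eqxx mulr1.
rewrite (bigD1 j) //= big1 => [|k /negbTE k_neq_j]; first by rewrite mxE eqxx orbT mulr1 addr0.
by rewrite mxE (negbTE j_neq0) k_neq_j mulr0.
Qed.

Lemma det_const_col0 (R : comNzRingType) m (B : 'M[R]_m.+1) (c : R) (x : 'I_m.+1 -> R) :
  \det (\matrix_(i, j) if j == ord0 then c else B i j + x j)
  = c * \det (\matrix_(i, j) if j == ord0 then 1 else B i j).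
Proof.
pose V : 'M[R]_m.+1 := \matrix_(i, j)
  if i == ord0 then (if j == ord0 then c else x j) else (i == j)%:R.
have detV : \det V = c.
  rewrite -det_tr det_trig; last first.
    apply/is_trig_mxP => i j lt_ij; rewrite !mxE -[j == i]val_eqE -[j == ord0]val_eqE /=.
    by rewrite (gtn_eqF lt_ij) (gtn_eqF (leq_ltn_trans (leq0n i) lt_ij)).
  by rewrite big_ord_recl !mxE eqxx big1 ?mulr1 // => i _; rewrite !mxE eqxx.
rewrite mulrC -detV -det_mulmx; congr (\det _); apply/matrixP => i j.
rewrite !mxE (bigD1 ord0) //= !mxE !eqxx mul1r.
case: eqP => [-> | /eqP j_neq0].
  by rewrite big1 ?addr0 // => k /negbTE k_neq0; rewrite !mxE k_neq0 mulr0.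
rewrite (bigD1 j) //= !mxE (negbTE j_neq0) eqxx mulr1 big1 ?addr0 1?addrC //.
by move=> k /andP[/negbTE k_neq0 /negbTE k_neq_j]; rewrite !mxE k_neq0 k_neq_j mulr0.
Qed.

Lemma det_add_const1 (R : comNzRingType) m (C : 'M[R]_m.+1) (a : R) :
  (forall i, \sum_j C i j = a) -> a * \det (C + const_mx 1) = (a + m.+1%:R) * \det C.
Proof.
move=> row_sumC; set D := \matrix_(i, j) if j == ord0 then 1 else C i j.
have -> : \det C = a * \det D.
  rewrite -det_sum_col0 -(det_const_col0 _ _ (fun=> 0)); congr (\det _).
  by apply/matrixP => i j; rewrite !mxE row_sumC addr0.
have -> : \det (C + const_mx 1) = (a + m.+1%:R) * \det D.
  rewrite -det_sum_col0 -(det_const_col0 _ _ (fun=> 1)); congr (\det _).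
  apply/matrixP => i j; rewrite !mxE; case: ifP => // _.
  rewrite (eq_bigr (fun k => C i k + 1)) => [|k _]; last by rewrite !mxE.
  by rewrite big_split /= row_sumC sumr_const card_ord.
by rewrite mulrCA.
Qed.

Lemma char_poly_sub_const1 (R : comNzRingType) m (A : 'M[R]_m.+1) (a : R) :
  (forall i, \sum_j A i j = a) ->
  ('X - a%:P) * char_poly (A - const_mx 1) = ('X - (a - m.+1%:R)%:P) * char_poly A.
Proof.
move=> row_sumA; rewrite /char_poly.
have -> : char_poly_mx (A - const_mx 1) = char_poly_mx A + const_mx 1.
  by apply/matrixP => i j; rewrite !mxE rmorphB opprB addrA addrAC.
have row_sum_char_poly_mx i : \sum_j char_poly_mx A i j = 'X - a%:P.
  rewrite (eq_bigr (fun j => 'X *+ (i == j) - (A i j)%:P)) => [|j _]; last by rewrite !mxE.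
  rewrite sumrB -rmorph_sum row_sumA (bigD1 i) //= eqxx big1 ?addr0 // => j /negbTE.
  by rewrite eq_sym => ->.
by rewrite (det_add_const1 row_sum_char_poly_mx) polyCB rmorph_nat opprB addrA addrAC.
Qed.

Lemma size_char_poly_roots (R : comNzRingType) n (A : 'M[R]_n) (s : seq R) :
  char_poly A = \prod_(x <- s) ('X - x%:P) -> size s = n.
Proof.
by move=> char_polyA; have := size_char_poly A; rewrite char_polyA size_prod_XsubC => -[].
Qed.

Lemma char_poly_scalar_sub (R : comNzRingType) n (A : 'M[R]_n) (c : R) (s : seq R) :
  char_poly A = \prod_(x <- s) ('X - x%:P) ->
  char_poly (c%:M - A) = \prod_(x <- s) ('X - (c - x)%:P).
Proof.
move=> char_polyA; have size_s := size_char_poly_roots char_polyA.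
pose q : {poly R} := c%:P - 'X.
have comp_char_poly_mx : map_mx (comp_poly q) (char_poly_mx A) = - char_poly_mx (c%:M - A).
  apply/matrixP => i j; rewrite !mxE; case: (i == j) => /=;
    by rewrite ?mulr1n ?mulr0n comp_polyB ?comp_polyX comp_polyC rmorphB ?polyC0 /q; ring.
have := det_map_mx (comp_poly q) (char_poly_mx A).
rewrite comp_char_poly_mx -scaleN1r detZ -/(char_poly A) -/(char_poly _) char_polyA.
rewrite rmorph_prod /=.
have comp_q x : ('X - x%:P) \Po q = - ('X - (c - x)%:P).
  by rewrite comp_polyB comp_polyX comp_polyC polyCB /q; ring.
under eq_bigr do rewrite comp_q.
rewrite -[n in (-1) ^+ n]size_s (big_nth 0) big_mkord prodrN card_ord.
move=> /(can_inj (signrMK _)) ->.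
by rewrite [RHS](big_nth 0) big_mkord.
Qed.

Lemma sum_char_poly_roots (R : comNzRingType) n (A : 'M[R]_n) (s : seq R) :
  char_poly A = \prod_(x <- s) ('X - x%:P) -> \sum_(x <- s) x = \tr A.
Proof.
move=> char_polyA; have size_s := size_char_poly_roots char_polyA.
case: n A char_polyA size_s => [|m] A char_polyA size_s.
  by move/size0nil: size_s => ->; rewrite big_nil /mxtrace big_ord0.
apply: oppr_inj; rewrite -char_poly_trace // char_polyA -size_s coefPn_prod_XsubC //.
by rewrite size_s.
Qed.

Lemma perm_reflect_sorted (R : realFieldType) (c : R) (s t : seq R) : 0 < c ->
  sorted (fun x y => y <= x) s -> sorted (fun x y => y <= x) t ->
  all (>= 0) s -> all (>= 0) t ->
  perm_eq (c :: t) (0 :: map (fun x => c - x) s) ->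
  exists2 s', s = rcons s' 0 & t = rcons (rev (map (fun x => c - x) s')) 0.
Proof.
move=> c_gt0 s_sorted t_sorted s_ge0 t_ge0 perm_ts.
have s0 : 0 \in s.
  have : c \in 0 :: map (fun x => c - x) s by rewrite -(perm_mem perm_ts) mem_head.
  rewrite in_cons gt_eqF //= => /mapP[x x_s /eqP].
  by rewrite eq_sym subr_eq addrC -subr_eq subrr => /eqP ->.
case/lastP: s s_sorted s_ge0 s0 perm_ts => [//|s' x] s_sorted s_ge0 s0 perm_ts.
move: s_sorted; rewrite -rev_sorted rev_rcons /= path_sortedE; last exact: le_trans.
case/andP=> x_min; rewrite rev_sorted => s'_sorted.
have x0 : x = 0.
  apply/le_anti; rewrite (allP s_ge0) ?mem_rcons ?mem_head // andbT.
  move: s0; rewrite mem_rcons in_cons => /predU1P[<- // | s'0].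
  by apply: (allP x_min); rewrite mem_rev.
subst x; exists s' => //; set l := map (fun x => c - x) s'.
have perm_t : perm_eq t (rcons (rev l) 0).
  rewrite -(perm_cons c); apply: perm_trans perm_ts _.
  apply/seq.permP => p; rewrite /= map_rcons subr0 -!cats1 !count_cat count_rev /=.
  by rewrite -/l !addn0 addnCA [RHS]addnCA [(p c + _)%N]addnC.
apply: (sorted_eq _ _ t_sorted _ perm_t).
- by move=> y x z /[swap]; apply: le_trans.
- by move=> x y /le_anti.
rewrite -rev_cons rev_sorted /= path_min_sorted.
  by rewrite sorted_map; apply: sub_sorted s'_sorted => y z /=; rewrite lerD2l lerN2.
apply/allP => y y_l; apply: (allP t_ge0).
by rewrite (perm_mem perm_t) mem_rcons in_cons mem_rev y_l orbT.
Qed.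

Lemma sum_nth_take (R : nmodType) (s : seq R) k :
  \sum_(0 <= i < k) nth 0 s i = \sum_(x <- take k s) x.
Proof.
elim: s k => [|x s IHs] k.
  by rewrite big_nil big1 // => i _; rewrite nth_nil.
case: k => [|k]; first by rewrite big_geq // take0 big_nil.
by rewrite big_nat_recl //= big_cons -IHs.
Qed.

(* [laplacian] over an arbitrary ring, so that it can be moved to [R[i]]. *)
Definition lapmx (R : pzRingType) n (e : rel 'I_n) : 'M[R]_n :=
  \matrix_(i, j) ((i == j)%:R * \sum_k (e i k)%:R - (e i j)%:R).

Lemma lapmx_row_sum (R : pzRingType) n (e : rel 'I_n) i : \sum_j lapmx R e i j = 0.
Proof.
set d : R := \sum_k (e i k)%:R.
rewrite (eq_bigr (fun j => (i == j)%:R * d - (e i j)%:R)) => [|j _]; last by rewrite mxE.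
rewrite sumrB (bigD1 i) //= eqxx mul1r big1 ?addr0 ?subrr // => j /negbTE.
by rewrite eq_sym => ->; rewrite mul0r.
Qed.

Lemma map_lapmx (R S : pzRingType) (f : {rmorphism R -> S}) n (e : rel 'I_n) :
  map_mx f (lapmx R e) = lapmx S e.
Proof.
apply/matrixP => i j; rewrite !mxE rmorphB rmorphM !rmorph_nat rmorph_sum.
by congr (_ * _ - _); apply: eq_bigr => k _; rewrite rmorph_nat.
Qed.

Lemma laplacian_lapmx (R : realType) n (e : rel 'I_n) :
  irreflexive e -> laplacian R e = lapmx R e.
Proof.
move=> irr_e; apply/matrixP => i j; rewrite !mxE.
have -> : #|[set k | e i k]|%:R = \sum_k (e i k)%:R :> R.
  rewrite cardsE -sum1_card natr_sum big_mkcond.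
  by apply: eq_bigr => k _; rewrite unfold_in; case: (e i k).
by case: eqP => [<-|_]; rewrite ?irr_e ?mul1r ?subr0 ?mul0r ?sub0r.
Qed.

Lemma lapmx_form (C : numClosedFieldType) n (e : rel 'I_n) (w : 'I_n -> C) :
  symmetric e ->
  2 * \sum_i \sum_j w i * lapmx C e i j * (w j)^* =
  \sum_i \sum_j (e i j)%:R * ((w i - w j) * (w i - w j)^*).
Proof.
move=> sym_e; pose f i j := (e i j)%:R * (w i * (w i)^* - w i * (w j)^*).
have -> : \sum_i \sum_j w i * lapmx C e i j * (w j)^* = \sum_i \sum_j f i j.
  apply: eq_bigr => i _; set d : C := \sum_k (e i k)%:R.
  rewrite (eq_bigr (fun j => (i == j)%:R * d * (w i * (w j)^*)
                            - (e i j)%:R * (w i * (w j)^*))) => [|j _]; last first.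
    by rewrite mxE -/d; ring.
  rewrite sumrB (bigD1 i) //= eqxx mul1r big1 ?addr0 => [|j /negbTE]; last first.
    by rewrite eq_sym => ->; rewrite !mul0r.
  under [RHS]eq_bigr do rewrite /f mulrBr.
  by rewrite sumrB -mulr_suml.
have -> : \sum_i \sum_j (e i j)%:R * ((w i - w j) * (w i - w j)^*) =
          \sum_i \sum_j (f i j + f j i).
  by apply: eq_bigr => i _; apply: eq_bigr => j _; rewrite /f (sym_e j i) rmorphB; ring.
under [RHS]eq_bigr do rewrite big_split.
by rewrite big_split /= [X in _ + X]exchange_big mulr_natl mulr2n.
Qed.

Lemma lapmx_eigenvalue_ge0 (C : numClosedFieldType) n (e : rel 'I_n) (z : C) :
  symmetric e -> root (char_poly (lapmx C e)) z -> 0 <= z.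
Proof.
move=> sym_e; rewrite -eigenvalue_root_char => /eigenvalueP [v vM v_neq0].
pose norm2 := \sum_j v 0 j * (v 0 j)^*.
have form_eq : \sum_i \sum_j v 0 i * lapmx C e i j * (v 0 j)^* = z * norm2.
  rewrite exchange_big mulr_sumr; apply: eq_bigr => j _; rewrite -mulr_suml.
  have -> : \sum_i v 0 i * lapmx C e i j = (v *m lapmx C e) 0 j by rewrite mxE.
  by rewrite vM mxE mulrA.
have [j vj_neq0] : exists j, v 0 j != 0.
  apply/existsP; apply: contraR v_neq0 => /existsPn v0.
  by apply/eqP/matrixP => i k; rewrite ord1 mxE; apply/eqP/negPn/v0.
have norm2_gt0 : 0 < norm2.
  rewrite /norm2 (bigD1 j) //=; apply: ltr_wpDr; last by rewrite mul_conjC_gt0.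
  by apply: sumr_ge0 => k _; apply: mul_conjC_ge0.
have : 0 <= 2 * (z * norm2).
  rewrite -form_eq lapmx_form //; apply: sumr_ge0 => i _; apply: sumr_ge0 => k _.
  by rewrite mulr_ge0 ?ler0n ?mul_conjC_ge0.
by rewrite pmulr_rge0 ?ltr0n // pmulr_lge0.
Qed.

Lemma lapmx_char_poly_split (R : rcfType) n (e : rel 'I_n) : symmetric e ->
  exists2 s : seq R, all (>= 0) s & char_poly (lapmx R e) = \prod_(x <- s) ('X - x%:P).
Proof.
move=> sym_e; have [r char_polyC] := closed_field_poly_normal (char_poly (lapmx R[i] e)).
rewrite (monicP (char_poly_monic _)) scale1r in char_polyC.
have r_ge0 z : z \in r -> 0 <= z.
  by move=> z_r; apply: (lapmx_eigenvalue_ge0 sym_e); rewrite char_polyC root_prod_XsubC.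
exists [seq complex.Re z | z <- r].
  by rewrite all_map; apply/allP => z z_r; rewrite /= -ler0c RRe_real ?ger0_real ?r_ge0.
apply: (@map_poly_inj _ _ (real_complex R)).
rewrite map_char_poly map_lapmx char_polyC map_prod_XsubC big_map.
by apply: eq_big_seq => z z_r; rewrite -{1}(RRe_real (ger0_real (r_ge0 z z_r))).
Qed.

Lemma laplacian_spectrum_exists (R : realType) n (e : rel 'I_n) :
  simple_graph e -> exists s : seq R, lap_spectrum_spec e s.
Proof.
move=> [sym_e irr_e]; have [s _ char_polyL] := lapmx_char_poly_split R sym_e.
rewrite -laplacian_lapmx // in char_polyL.
exists (sort (fun x y : R => y <= x) s); split.
- by rewrite size_sort (size_char_poly_roots char_polyL).
- by apply: sort_sorted => x y; apply: le_total.
- by rewrite char_polyL; apply: perm_big; rewrite perm_sym perm_sort.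
Qed.

Lemma lap_eigs_spec (R : realType) n (e : rel 'I_n) :
  simple_graph e -> lap_spectrum_spec e (lap_eigs R e).
Proof. by move=> sg_e; apply: epsilon_spec; apply: laplacian_spectrum_exists. Qed.

Lemma lap_eigs_ge0 (R : realType) n (e : rel 'I_n) :
  simple_graph e -> all (>= 0) (lap_eigs R e).
Proof.
move=> sg_e; have [sym_e irr_e] := sg_e.
have [s s_ge0 char_polyL] := lapmx_char_poly_split R sym_e.
have [_ _] := lap_eigs_spec R sg_e.
by rewrite laplacian_lapmx // char_polyL => /prod_XsubC_eq/perm_all <-.
Qed.

Lemma lap_ksum_take (R : realType) n (e : rel 'I_n) k :
  lap_ksum R e k = \sum_(x <- take k (lap_eigs R e)) x.
Proof. by rewrite /lap_ksum big_add1 -sum_nth_take. Qed.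

Lemma handshake n (e : rel 'I_n) : simple_graph e ->
  (\sum_i \sum_j e i j = 2 * nedges e)%N.
Proof.
move=> [sym_e irr_e].
have split_edge i j : ((e i j : nat) = ((i < j) && e i j) + ((j < i) && e j i))%N.
  by rewrite (sym_e j i); case: ltngtP => [_|_|/val_inj <-]; rewrite ?irr_e; case: (e i j).
have -> : nedges e = (\sum_(i : 'I_n) \sum_(j : 'I_n) ((i < j)%N && e i j))%N.
  rewrite /nedges cardsE -sum1_card pair_big /= big_mkcond /=.
  by apply: eq_bigr => -[i j] _; rewrite unfold_in; case: (_ && _).
under eq_bigr do under eq_bigr do rewrite split_edge.
under eq_bigr do rewrite big_split.
by rewrite big_split /= [X in (_ + X)%N]exchange_big addnn mul2n.
Qed.

Lemma lap_eigs_sum (R : realType) n (e : rel 'I_n) : simple_graph e ->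
  \sum_(x <- lap_eigs R e) x = (2 * nedges e)%:R.
Proof.
move=> sg_e; have [_ irr_e] := sg_e; have [_ _ char_polyL] := lap_eigs_spec R sg_e.
rewrite (sum_char_poly_roots char_polyL) -handshake // natr_sum laplacian_lapmx //.
apply: eq_bigr => i _; rewrite mxE eqxx irr_e subr0 mul1r natr_sum.
by apply: eq_bigr.
Qed.

Lemma compl_simple n (e : rel 'I_n) : simple_graph e -> simple_graph (compl_graph e).
Proof. by move=> [sym_e _]; split=> [i j|i]; rewrite /compl_graph ?eqxx // eq_sym sym_e. Qed.

Lemma laplacian_compl (R : realType) n (e : rel 'I_n) : simple_graph e ->
  laplacian R (compl_graph e) = n%:R%:M - laplacian R e - const_mx 1.
Proof.
move=> sg_e; have [_ irr_e] := sg_e.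
rewrite !laplacian_lapmx //; last exact: (compl_simple sg_e).2.
apply/matrixP => i j; rewrite !mxE.
have -> : \sum_k ((compl_graph e) i k)%:R = n%:R - 1 - \sum_k (e i k)%:R :> R.
  rewrite (eq_bigr (fun k => 1 - (i == k)%:R - (e i k)%:R)) => [|k _].
    rewrite !sumrB sumr_const card_ord (bigD1 i) //= eqxx big1 ?addr0 // => k /negbTE.
    by rewrite eq_sym => ->.
  rewrite /compl_graph; case: eqP => [<-|_]; rewrite ?irr_e /=;
    by case: (e i k); rewrite /= ?subr0 ?subrr.
rewrite /compl_graph; case: eqP => [<-|_]; rewrite ?irr_e /=;
  by case: (e i j) => /=; ring.
Qed.

Lemma lap_eigs_compl (R : realType) m (e : rel 'I_m.+1) : simple_graph e ->
  perm_eq (m.+1%:R :: lap_eigs R (compl_graph e))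
          (0 :: map (fun x => m.+1%:R - x) (lap_eigs R e)).
Proof.
move=> sg_e; have [_ irr_e] := sg_e.
have [_ _ char_polyL] := lap_eigs_spec R sg_e.
have [_ _ char_polyLc] := lap_eigs_spec R (compl_simple sg_e).
have row_sum i : \sum_j (m.+1%:R%:M - laplacian R e) i j = m.+1%:R.
  rewrite (eq_bigr (fun j => m.+1%:R%:M i j - lapmx R e i j)) => [|j _]; last first.
    by rewrite laplacian_lapmx // !mxE.
  rewrite sumrB lapmx_row_sum subr0 (bigD1 i) //= mxE eqxx big1 ?addr0 // => j /negbTE.
  by rewrite mxE eq_sym => ->.
have := char_poly_sub_const1 row_sum.
rewrite -laplacian_compl // char_polyLc subrr (char_poly_scalar_sub _ char_polyL).
by move=> char_poly_eq; apply: prod_XsubC_eq; rewrite !big_cons big_map char_poly_eq.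
Qed.

Lemma lap_ksum_compl (R : realType) m (e : rel 'I_m.+1) k :
  simple_graph e -> (k <= m)%N ->
  lap_ksum R (compl_graph e) (m - k) =
  m.+1%:R *+ (m - k) - (2 * nedges e)%:R + lap_ksum R e k.
Proof.
move=> sg_e le_km; have sg_ce := compl_simple sg_e.
have [size_s s_sorted _] := lap_eigs_spec R sg_e.
have [_ t_sorted _] := lap_eigs_spec R sg_ce.
have [s' s_eq t_eq] := perm_reflect_sorted (ltr0Sn _ m) s_sorted t_sorted
  (lap_eigs_ge0 R sg_e) (lap_eigs_ge0 R sg_ce) (lap_eigs_compl R sg_e).
have size_s' : size s' = m by move: size_s; rewrite s_eq size_rcons => -[].
rewrite !lap_ksum_take -lap_eigs_sum // t_eq s_eq -!cats1.
rewrite takel_cat ?size_rev ?size_map ?size_s' ?leq_subr //.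
rewrite takel_cat ?size_s' // take_rev size_map size_s' subKn //.
rewrite big_rev -map_drop big_map sumrB big_const_seq count_predT iter_addr_0.
rewrite size_drop size_s'.
by rewrite big_cat big_seq1 /= addr0 -{2}(cat_take_drop k s') big_cat /=; ring.
Qed.

Theorem lemma4 (R : realType) (n : nat) (G : rel 'I_n) :
  simple_graph G ->
  (forall (T : rel 'I_n) (k : nat),
      simple_graph T -> threshold T -> nedges T = nedges G ->
      (1 <= k <= n.-1)%N ->
      lap_ksum R G k <= lap_ksum R T k ->
      lap_ksum R (compl_graph G) (n - k - 1) <= lap_ksum R (compl_graph T) (n - k - 1))
  /\
  (forall T : rel 'I_n,
      simple_graph T -> threshold T -> nedges T = nedges G ->
      lap_ksum R (compl_graph T) n.-1 = lap_ksum R (compl_graph G) n.-1).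
Proof.
case: n G => [|m] G sg_G.
  split=> [T k _ _ _ /andP[k_ge1 /(leq_trans k_ge1)] //|T _ _ _].
  by rewrite /lap_ksum !big_geq.
split=> [T k sg_T _ edges_T /andP[_ le_km] le_ksum | T sg_T _ edges_T].
  by rewrite subn1 subSKn !lap_ksum_compl // edges_T lerD2l.
have := lap_ksum_compl R sg_T (leq0n m); have := lap_ksum_compl R sg_G (leq0n m).
by rewrite subn0 edges_T /= => -> ->; rewrite /lap_ksum !big_geq.
Qed.
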